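(* Let $\tilde{\mathcal{X}}=\mathcal{Y}=\mathcal{Z}=\{0,1\}$ and $\mathcal{X}=\tilde{\mathcal{X}}\times\mathcal{Z}$. The channel input is $X=(\tilde X,\tilde Z)$; let $N\sim\mathsf{Ber}(0.5)$ be independent of $X$, set $Y=\tilde X\tilde Z+N(1-\tilde Z)$ with induced kernel $P_{Y|\tilde X,\tilde Z}$, and define the wiretap channel $P_{Y,Z|\tilde X,\tilde Z}=P_{Y|\tilde X,\tilde Z}\mathbb{1}\{Z=\tilde Z\}$. Let the cost function be $\mathsf{C}(\tilde x,\tilde z)=\tilde z$ and the cost constraint $b=0.5$. Then $$\max_{P_{U,V,X}} \big(I_P(V;Y|U)-I_P(V;Z|U)\big)\ \ge\ 0.5\ >\ \max_{P_{V,X}:\ \mathbb{E}_P[\mathsf{C}(X)]\le 0.5}\big(I_P(V;Y)-I_P(V;Z)\big),$$ where the first maximum is over finite sets $\mathcal{U},\mathcal{V}$ and PMFs $P_{U,V,X}$ with $P_{U,V,X}=P_{U,V}P_{X|V}$ and $\mathbb{E}_P[\mathsf{C}(X)]\le 0.5$, computed under $P_{U,V,X}P_{Y,Z|X}$, and the second maximum is over finite sets $\mathcal{V}$ and PMFs $P_{V,X}$, computed under $P_{V,X}P_{Y,Z|X}$.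
   Context: The left-hand maximum is the quantity $\bar C(0.5)$, which (by the paper's main theorem) equals the secrecy-capacity of this cost-constrained wiretap channel; the right-hand side is the single-auxiliary analogue of the unconstrained wiretap secrecy-capacity formula restricted to cost-feasible input distributions. *)

From Stdlib Require Import Reals.
From mathcomp Require Import all_boot all_order all_algebra.
From mathcomp Require Import Rstruct.
Set Implicit Arguments. Unset Strict Implicit. Unset Printing Implicit Defensive.
Import Order.TTheory GRing.Theory Num.Theory.
Local Open Scope ring_scope.

Definition log2 (x : R) : R := (ln x / ln 2)%R.

Definition is_pmf (T : finType) (p : T -> R) : Prop :=
  (forall t, 0 <= p t) /\ \sum_(t : T) p t = 1.

Definition mi (B C : finType) (p : B -> C -> R) : R :=
  let pB b := \sum_(c : C) p b c in
  let pC c := \sum_(b : B) p b c in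
  \sum_(b : B) \sum_(c : C)
     (if 0 < p b c then p b c * log2 (p b c / (pB b * pC c)) else 0).

(* Conditional mutual information I(B;C|A) of a joint pmf p(a,b,c). *)
Definition cmi (A B C : finType) (p : A -> B -> C -> R) : R :=
  let pA a := \sum_(b : B) \sum_(c : C) p a b c in
  let pAB a b := \sum_(c : C) p a b c in
  let pAC a c := \sum_(b : B) p a b c in
  \sum_(a : A) \sum_(b : B) \sum_(c : C)
     (if 0 < p a b c then p a b c * log2 (p a b c * pA a / (pAB a b * pAC a c))
      else 0).

(* Channel input X = (Xt, Zt) in {0,1} x {0,1}, encoded with bool (true = 1). *)
Definition Xin := (bool * bool)%type.

Definition b2R (b : bool) : R := if b then 1 else 0.

(* P_{Y|Xt,Zt}: Y = Xt*Zt + N*(1-Zt), N ~ Ber(1/2) independent of X.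
   If Zt = 1 then Y = Xt; if Zt = 0 then Y = N is uniform. *)
Definition PY (x : Xin) (y : bool) : R :=
  if x.2 then b2R (y == x.1) else 1 / 2.

Definition W (x : Xin) (y z : bool) : R := PY x y * b2R (z == x.2).

Definition cost (x : Xin) : R := b2R x.2.

(* Quantities for P_{U,V,X} = P_{U,V} P_{X|V} with kernel K = P_{X|V}. *)
Definition jointUVY (U V : finType) (PUV : U * V -> R) (K : V -> Xin -> R)
  (u : U) (v : V) (y : bool) : R :=
  \sum_(x : Xin) \sum_(z : bool) PUV (u, v) * K v x * W x y z.
Definition jointUVZ (U V : finType) (PUV : U * V -> R) (K : V -> Xin -> R)
  (u : U) (v : V) (z : bool) : R :=
  \sum_(x : Xin) \sum_(y : bool) PUV (u, v) * K v x * W x y z.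
Definition costUV (U V : finType) (PUV : U * V -> R) (K : V -> Xin -> R) : R :=
  \sum_(u : U) \sum_(v : V) \sum_(x : Xin) PUV (u, v) * K v x * cost x.

Definition jointVY (V : finType) (PVX : V * Xin -> R) (v : V) (y : bool) : R :=
  \sum_(x : Xin) \sum_(z : bool) PVX (v, x) * W x y z.
Definition jointVZ (V : finType) (PVX : V * Xin -> R) (v : V) (z : bool) : R :=
  \sum_(x : Xin) \sum_(y : bool) PVX (v, x) * W x y z.
Definition costV (V : finType) (PVX : V * Xin -> R) : R :=
  \sum_(v : V) \sum_(x : Xin) PVX (v, x) * cost x.

(* Achievability is time sharing between an uncoded bit sent over the noiseless
   branch [Zt = 1] and the cost-free input [(0, 0)]: the eavesdropper only sees
   which branch is used, i.e. [U], so it learns nothing given [U], while the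
   legitimate receiver gets one bit half of the time.
   For the converse let [A] be the probability of [Zt = 0], so [A >= 1/2] by
   the cost constraint. Writing mutual informations of binary outputs as
   differences of (unnormalised) binary entropies, convexity of [x ln x] bounds
   the per-letter contribution of each [v], and the log-sum inequality
   aggregates these bounds: in nats, [I(V;Y) - I(V;Z) <= ln 2 - h(A/2)] with [h]
   the binary entropy. Since [h(A/2) >= A (1 - A/2) >= 3/8] and [ln 2 < 3/4],
   this is strictly below half a bit. *)

From Stdlib Require Import Reals FunctionalExtensionality.
From mathcomp Require Import all_boot all_order all_algebra.
From mathcomp Require Import Rstruct.
From mathcomp Require Import lra ring.
Import Order.TTheory GRing.Theory Num.Theory.
Set Implicit Arguments. Unset Strict Implicit.
Local Open Scope ring_scope.
Arguments ln _%_ring_scope.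
Arguments log2 x%_ring_scope.

Lemma log2E (x : R) : log2 x = ln x / ln 2.
Proof. by rewrite /log2 IZRposE. Qed.

Lemma ln_le_subr1 (x : R) : 0 < x -> ln x <= x - 1.
Proof.
move=> /RltP x0; have /RleP := exp_ineq1_le (ln x).
by rewrite exp_ln // RplusE R1E lerBrDr addrC.
Qed.

Lemma lnM (x y : R) : 0 < x -> 0 < y -> ln (x * y) = ln x + ln y.
Proof. by move=> /RltP x0 /RltP y0; rewrite ln_mult. Qed.

Lemma lnV (x : R) : 0 < x -> ln x^-1 = - ln x.
Proof. by move=> /RltP x0; rewrite -RinvE ln_Rinv. Qed.

Lemma ln1 : ln 1 = 0.
Proof. exact: ln_1. Qed.

Lemma ltr_ln (x y : R) : 0 < x -> x < y -> ln x < ln y.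
Proof. by move=> /RltP x0 /RltP xy; apply/RltP; apply: ln_increasing. Qed.

Lemma lnXn (x : R) n : 0 < x -> ln (x ^+ n) = n%:R * ln x.
Proof.
move=> x0; elim: n => [|n IH]; first by rewrite expr0 ln1 mul0r.
by rewrite exprS lnM ?exprn_gt0 // IH mulrSr mulrDl mul1r addrC.
Qed.

Lemma ln2_gt0 : 0 < ln 2 :> R.
Proof. by rewrite -ln1; apply: ltr_ln; lra. Qed.

(* [2 < (35/32)^8] and [ln (35/32) <= 3/32]. *)
Lemma ln2_lt : ln 2 < 3 / 4 :> R.
Proof.
have : ln 2 < ln ((35 / 32) ^+ 8) :> R.
  by apply: ltr_ln; rewrite ?(exprS, expr0); lra.
rewrite lnXn; last lra.
have : ln (35 / 32) <= 35 / 32 - 1 :> R by apply: ln_le_subr1; lra.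
lra.
Qed.

Definition xlnx (x : R) : R := if 0 < x then x * ln x else 0.
Arguments xlnx x%_ring_scope.

Lemma xlnx0 : xlnx 0 = 0.
Proof. by rewrite /xlnx ltxx. Qed.

Lemma xlnxE (x : R) : 0 <= x -> xlnx x = x * ln x.
Proof.
by rewrite le0r => /predU1P[->|x0]; rewrite ?xlnx0 ?mul0r // /xlnx x0.
Qed.

Lemma xlnx1 : xlnx 1 = 0.
Proof. by rewrite xlnxE ?ler01 // ln1 mulr0. Qed.

Lemma xlnx_le (x : R) : 0 <= x -> xlnx x <= x * (x - 1).
Proof.
rewrite le0r => /predU1P[->|x0]; first by rewrite xlnx0 mul0r.
by rewrite (xlnxE (ltW x0)) (ler_pM2l x0) ln_le_subr1.
Qed.

Lemma xlnx_half (x : R) : 0 <= x -> xlnx x = x * ln 2 + 2 * xlnx (x / 2).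
Proof.
rewrite le0r => /predU1P[->|x0]; first by rewrite !mul0r xlnx0 mulr0 addr0.
have x20 : 0 < x / 2 by rewrite divr_gt0 //; lra.
rewrite (xlnxE (ltW x0)) (xlnxE (ltW x20)) lnM // ?invr_gt0 // lnV //; lra.
Qed.

Lemma mulr_lnB_le (x y : R) : 0 < x -> 0 < y -> x * (ln y - ln x) <= y - x.
Proof.
move=> x0 y0; have := ler_wpM2l (ltW x0) (ln_le_subr1 (divr_gt0 y0 x0)).
have -> : x * (y / x - 1) = y - x by field; rewrite gt_eqF.
by rewrite lnM ?invr_gt0 // lnV.
Qed.

Lemma xlnx_tangent (x y : R) : 0 <= x -> 0 < y ->
  xlnx y + (ln y + 1) * (x - y) <= xlnx x.
Proof.
rewrite le0r => /predU1P[->|x0] y0; first by rewrite xlnx0 (xlnxE (ltW y0)); lra.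
rewrite (xlnxE (ltW x0)) (xlnxE (ltW y0)).
have := mulr_lnB_le x0 y0; nra.
Qed.

Lemma xlnx_convex (l x y : R) : 0 <= l <= 1 -> 0 <= x -> 0 <= y ->
  xlnx (l * x + (1 - l) * y) <= l * xlnx x + (1 - l) * xlnx y.
Proof.
move=> /andP[l0 l1] x0 y0; set z := l * x + (1 - l) * y.
have l1' : 0 <= 1 - l by rewrite subr_ge0.
have lx0 : 0 <= l * x by rewrite mulr_ge0.
have ly0 : 0 <= (1 - l) * y by rewrite mulr_ge0.
have [z0|z0] := eqVneq z 0.
  have mul_xlnx0 (k t : R) : k * t = 0 -> k * xlnx t = 0.
    by move/eqP; rewrite mulf_eq0 => /orP[]/eqP->; rewrite ?mul0r ?xlnx0 ?mulr0.
  rewrite z0 xlnx0 !mul_xlnx0 ?addr0 //; rewrite /z in z0; lra.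
have {}z0 : 0 < z by rewrite lt_def z0 addr_ge0.
have := ler_wpM2l l0 (xlnx_tangent x0 z0).
have := ler_wpM2l l1' (xlnx_tangent y0 z0).
have : l * (xlnx z + (ln z + 1) * (x - z))
       + (1 - l) * (xlnx z + (ln z + 1) * (y - z)) = xlnx z by rewrite /z; ring.
lra.
Qed.

Lemma xlnx_supermodular (a b c : R) : 0 <= a -> 0 <= b -> 0 <= c ->
  xlnx (a + b) + xlnx (a + c) <= xlnx (a + b + c) + xlnx a.
Proof.
move=> a0 b0 c0; have [bc0|bc0] := eqVneq (b + c) 0.
  have b_eq0 : b = 0 by lra.
  have c_eq0 : c = 0 by lra.
  by rewrite b_eq0 c_eq0 !addr0.
have {}bc0 : 0 < b + c by rewrite lt_def bc0 addr_ge0.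
have abc0 : 0 <= a + b + c by lra.
(* [a + c] and [a + b] are the convex combinations of [a] and [a + b + c]
   with weights [l, 1 - l] and [1 - l, l]. *)
set l := b / (b + c).
have l01 : 0 <= l <= 1.
  by rewrite divr_ge0 ?(ltW bc0) //= ler_pdivrMr // mul1r lerDl.
have l01' : 0 <= 1 - l <= 1 by lra.
have := xlnx_convex l01 a0 abc0; have := xlnx_convex l01' a0 abc0.
have -> : l * a + (1 - l) * (a + b + c) = a + c by rewrite /l; field; rewrite gt_eqF.
have -> : (1 - l) * a + (1 - (1 - l)) * (a + b + c) = a + b
  by rewrite /l; field; rewrite gt_eqF.
lra.
Qed.

Lemma log_sum_le (I : finType) (a b : I -> R) :
  (forall i, 0 <= a i) -> (forall i, a i <= b i) ->
  xlnx (\sum_i a i) - (\sum_i a i) * ln (\sum_i b i)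
    <= \sum_i (xlnx (a i) - a i * ln (b i)).
Proof.
move=> a0 ab; set A := \sum_i a i; set B := \sum_i b i.
have A0 : 0 <= A by rewrite sumr_ge0.
have [A_eq0|Apos] := eqVneq A 0.
  have a_eq0 i : a i = 0 by apply: (psumr_eq0P (fun i _ => a0 i) A_eq0).
  rewrite A_eq0 xlnx0 mul0r subr0 big1 // => i _.
  by rewrite a_eq0 xlnx0 mul0r subrr.
have {}Apos : 0 < A by rewrite lt_def Apos.
have Bpos : 0 < B by apply: lt_le_trans Apos _; apply: ler_sum.
(* [x ln (y / x) <= y - x] with [y = b i * A / B] bounds each summand. *)
have summand_ge i :
    a i * (ln A - ln B) + a i - b i * A / B <= xlnx (a i) - a i * ln (b i).
  have [ai_eq0|aipos] := eqVneq (a i) 0.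
    rewrite ai_eq0 xlnx0 !mul0r.
    have : 0 <= b i * A / B.
      by rewrite divr_ge0 ?(ltW Bpos) ?mulr_ge0 // (le_trans (a0 i)).
    lra.
  have {}aipos : 0 < a i by rewrite lt_def aipos a0.
  have bipos : 0 < b i by apply: lt_le_trans aipos (ab i).
  have := mulr_lnB_le aipos (divr_gt0 (mulr_gt0 bipos Apos) Bpos).
  rewrite !lnM ?invr_gt0 ?mulr_gt0 // lnV // (xlnxE (ltW aipos)); nra.
have := @ler_sum _ _ (index_enum I) xpredT _ _ (fun i _ => summand_ge i).
rewrite sumrB big_split sumrB /= -!mulr_suml -/A -/B.
rewrite [B * A]mulrC mulfK ?gt_eqF //.
by rewrite (xlnxE A0); lra.
Qed.

(* [(a + b) h (a / (a + b))], with [h] the binary entropy in nats. *)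
Definition ent2 (a b : R) : R := (xlnx (a + b) - xlnx a - xlnx b)%R.
Arguments ent2 (a b)%_ring_scope.

Lemma ent2_superadditive (I : finType) (a b : I -> R) :
  (forall i, 0 <= a i) -> (forall i, 0 <= b i) ->
  \sum_i ent2 (a i) (b i) <= ent2 (\sum_i a i) (\sum_i b i).
Proof.
move=> a0 b0.
have xlnxD (x y : R) : 0 <= x -> 0 <= y ->
    xlnx (x + y) = x * ln (x + y) + y * ln (x + y).
  by move=> x0 y0; rewrite xlnxE ?addr_ge0 // mulrDl.
have a_le i : a i <= a i + b i by rewrite lerDl.
have b_le i : b i <= a i + b i by rewrite lerDr.
have := log_sum_le a0 a_le; have := log_sum_le b0 b_le.
rewrite /ent2 big_split /= xlnxD ?sumr_ge0 // => hb ha.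
under eq_bigr => i _ do rewrite xlnxD //.
rewrite !sumrB !big_split /= in ha hb *; lra.
Qed.

Lemma ent2_le_ln2 (p q : R) : 0 <= p -> 0 <= q -> p + q = 1 -> ent2 p q <= ln 2.
Proof.
move=> p0 q0 pq1; have half0 : 0 < 1 / 2 :> R by lra.
have := xlnx_tangent p0 half0; have := xlnx_tangent q0 half0.
rewrite /ent2 pq1 xlnx1 (xlnxE (ltW half0)) mul1r lnV; last lra.
have -> : q = 1 - p by lra.
lra.
Qed.

Lemma ent2_ge (p q : R) : 0 <= p -> 0 <= q -> p + q = 1 -> 2 * p * q <= ent2 p q.
Proof.
move=> p0 q0 pq1; have := xlnx_le p0; have := xlnx_le q0.
rewrite /ent2 pq1 xlnx1; nra.
Qed.

Lemma ler_sum_term (K : numDomainType) (I : finType) (F : I -> K) (j : I) :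
  (forall i, 0 <= F i) -> F j <= \sum_i F i.
Proof. by move=> F0; rewrite (bigD1 j) //= lerDl sumr_ge0. Qed.

Lemma mi_summandE (p x y : R) : 0 <= p -> p <= x -> p <= y ->
  (if 0 < p then p * log2 (p / (x * y)) else 0) * ln 2
    = xlnx p - p * ln x - p * ln y.
Proof.
rewrite le0r => /predU1P[->|p0] px py; first by rewrite ltxx xlnx0 !mul0r !subr0.
have x0 : 0 < x by apply: lt_le_trans px.
have y0 : 0 < y by apply: lt_le_trans py.
rewrite p0 log2E (xlnxE (ltW p0)) lnM ?invr_gt0 ?mulr_gt0 //.
rewrite lnV ?mulr_gt0 // lnM //.
by field; rewrite gt_eqF ?ln2_gt0.
Qed.

Lemma mi_lnE (B C : finType) (p : B -> C -> R) : (forall b c, 0 <= p b c) ->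
  mi p * ln 2 = \sum_b \sum_c xlnx (p b c) - \sum_b xlnx (\sum_c p b c)
                - \sum_c xlnx (\sum_b p b c).
Proof.
move=> p0.
have sumc_xlnx :
    \sum_b xlnx (\sum_c p b c) = \sum_b \sum_c p b c * ln (\sum_c p b c).
  by apply: eq_bigr => b _; rewrite -mulr_suml xlnxE // sumr_ge0.
have sumb_xlnx :
    \sum_c xlnx (\sum_b p b c) = \sum_b \sum_c p b c * ln (\sum_b p b c).
  rewrite exchange_big; apply: eq_bigr => c _.
  by rewrite -mulr_suml xlnxE // sumr_ge0.
rewrite sumc_xlnx sumb_xlnx -!sumrB /mi mulr_suml; apply: eq_bigr => b _.
rewrite -!sumrB mulr_suml; apply: eq_bigr => c _.
by apply: mi_summandE => //; apply: ler_sum_term.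
Qed.

Lemma mi_boolE (V : finType) (p : V -> bool -> R) :
  (forall v c, 0 <= p v c) -> \sum_v (p v true + p v false) = 1 ->
  mi p * ln 2 = ent2 (\sum_v p v true) (\sum_v p v false)
                - \sum_v ent2 (p v true) (p v false).
Proof.
move=> p0 p1; rewrite mi_lnE // big_bool /= /ent2 -big_split /= p1 xlnx1.
have -> : \sum_v \sum_c xlnx (p v c)
          = \sum_v xlnx (p v true) + \sum_v xlnx (p v false).
  by rewrite -big_split; apply: eq_bigr => v _; rewrite big_bool.
have -> : \sum_v xlnx (\sum_c p v c) = \sum_v xlnx (p v true + p v false).
  by apply: eq_bigr => v _; rewrite big_bool.
rewrite !sumrB; ring.
Qed.

Lemma if_pos_mulr (p x : R) : 0 <= p -> (if 0 < p then p * x else 0) = p * x.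
Proof. by rewrite le0r => /predU1P[->|->]; rewrite ?ltxx ?mul0r. Qed.

Lemma cmiE (A B C : finType) (p : A -> B -> C -> R) :
  (forall a b c, 0 <= p a b c) ->
  cmi p = \sum_a \sum_b \sum_c p a b c
            * log2 (p a b c * (\sum_b \sum_c p a b c)
                    / ((\sum_c p a b c) * (\sum_b p a b c))).
Proof.
move=> p0; do 3!(apply: eq_bigr => ? _); exact: if_pos_mulr.
Qed.

Lemma ent2_gap_le (a b c : R) : 0 <= a -> 0 <= b -> 0 <= c ->
  ent2 (b + c) a - ent2 (a / 2 + b) (a / 2 + c)
    <= ent2 (a / 2) (b + c) - a * ln 2.
Proof.
move=> a0 b0 c0; have a20 : 0 <= a / 2 by rewrite divr_ge0 ?ler0n.
have := xlnx_supermodular a20 b0 c0; have := xlnx_half a0.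
rewrite /ent2 (_ : a / 2 + b + (a / 2 + c) = b + c + a) ?addrA; last lra.
lra.
Qed.

Lemma mi_gap_le (V : finType) (a b c : V -> R) :
  (forall v, 0 <= a v) -> (forall v, 0 <= b v) -> (forall v, 0 <= c v) ->
  \sum_v a v + \sum_v (b v + c v) = 1 -> \sum_v (b v + c v) <= 1 / 2 ->
  (mi (fun v y => if y then a v / 2 + b v else a v / 2 + c v)
   - mi (fun v z => if z then b v + c v else a v)) * ln 2 <= ln 2 - 3 / 8.
Proof.
move=> a0 b0 c0 total cost.
have bc0 v : 0 <= b v + c v by rewrite addr_ge0.
have a20 v : 0 <= a v / 2 by rewrite divr_ge0 ?ler0n.
have sum_eq1 (f : V -> R) : (forall v, f v = a v + (b v + c v)) -> \sum_v f v = 1.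
  by move=> fE; rewrite (eq_bigr _ (fun v _ => fE v)) big_split.
rewrite mulrBl !mi_boolE /=; first last.
- by apply: sum_eq1 => v; lra.
- by move=> v []; rewrite addr_ge0 ?a20 ?b0 ?c0.
- by apply: sum_eq1 => v; lra.
- by move=> v []; rewrite ?bc0 ?a0.
set A := \sum_v a v; set S := \sum_v (b v + c v).
rewrite -/A -/S in total cost.
have sum_half : \sum_v a v / 2 = A / 2 by rewrite -mulr_suml.
have hY : ent2 (\sum_v (a v / 2 + b v)) (\sum_v (a v / 2 + c v)) <= ln 2.
  apply: ent2_le_ln2; try by apply: sumr_ge0 => v _; rewrite addr_ge0.
  by rewrite -big_split; apply: sum_eq1 => v /=; lra.
have hV : \sum_v (ent2 (b v + c v) (a v) - ent2 (a v / 2 + b v) (a v / 2 + c v))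
          <= ent2 (A / 2) S - A * ln 2.
  apply: le_trans (ler_sum _ (fun v _ => ent2_gap_le (a0 v) (b0 v) (c0 v))) _.
  rewrite sumrB -mulr_suml lerD2r -sum_half.
  exact: ent2_superadditive.
have A0 : 0 <= A by rewrite sumr_ge0.
have S0 : 0 <= S by rewrite sumr_ge0.
have hA := xlnx_half A0.
have hZ : ent2 S A = - xlnx S - xlnx A.
  by rewrite /ent2 [S + A]addrC total xlnx1 sub0r.
have hW : ent2 (A / 2) S = xlnx (A / 2 + S) - xlnx (A / 2) - xlnx S by [].
have hq : 2 * (A / 2) * (A / 2 + S) <= ent2 (A / 2) (A / 2 + S).
  by apply: ent2_ge; lra.
have hq1 : 3 / 8 <= 2 * (A / 2) * (A / 2 + S) by nra.
(* As [A + S = 1]: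
   [ent2 (A / 2) S - ent2 S A - A ln 2 = - ent2 (A / 2) (A / 2 + S)]. *)
rewrite /ent2 (_ : A / 2 + (A / 2 + S) = 1) ?xlnx1 in hq; last lra.
rewrite sumrB in hV; lra.
Qed.

Lemma sum_pair (M : nmodType) (I J : finType) (F : I * J -> M) :
  \sum_t F t = \sum_i \sum_j F (i, j).
Proof. by rewrite pair_bigA; apply: eq_bigr => -[]. Qed.

Lemma big_Xin (M : nmodType) (F : Xin -> M) :
  \sum_x F x
    = F (true, true) + F (true, false) + F (false, true) + F (false, false).
Proof. by rewrite sum_pair !big_bool /= addrA. Qed.

Section InputSplit.

Variables (V : finType) (P : V * Xin -> R).

Let noisy v := P (v, (true, false)) + P (v, (false, false)).
Let clean1 v := P (v, (true, true)).
Let clean0 v := P (v, (false, true)).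

Lemma jointVYE v y :
  jointVY P v y =
    if y then noisy v / 2 + clean1 v else noisy v / 2 + clean0 v.
Proof.
rewrite /jointVY big_Xin !big_bool /W /PY /b2R /noisy /clean1 /clean0.
by case: y => /=; rewrite !RmultE; lra.
Qed.

Lemma jointVZE v z : jointVZ P v z = if z then clean1 v + clean0 v else noisy v.
Proof.
rewrite /jointVZ big_Xin !big_bool /W /PY /b2R /noisy /clean1 /clean0.
by case: z => /=; rewrite !RmultE; lra.
Qed.

Lemma costVE : costV P = \sum_v (clean1 v + clean0 v).
Proof.
by apply: eq_bigr => v _; rewrite big_Xin /cost /b2R /clean1 /clean0 /=; lra.
Qed.

Lemma sumVXE : \sum_t P t = \sum_v noisy v + \sum_v (clean1 v + clean0 v).
Proof.
rewrite -big_split sum_pair.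
by apply: eq_bigr => v _; rewrite big_Xin /noisy /clean1 /clean0 /=; ring.
Qed.

End InputSplit.

Lemma mi_jointV_gap_le (V : finType) (P : V * Xin -> R) :
  is_pmf P -> costV P <= 1 / 2 ->
  (mi (jointVY P) - mi (jointVZ P)) * ln 2 <= ln 2 - 3 / 8.
Proof.
move=> [P0 P1] cost.
have funext2 (f g : V -> bool -> R) : (forall v y, f v y = g v y) -> f = g.
  by move=> fg; do 2!(apply: functional_extensionality => ?); exact: fg.
rewrite (funext2 _ _ (jointVYE P)) (funext2 _ _ (jointVZE P)).
apply: mi_gap_le => [v|v|v||]; rewrite ?addr_ge0 //.
- by rewrite -P1 sumVXE.
- by rewrite -costVE.
Qed.

(* [U = true]: uniform [Xt] with [Zt = 1]; [U = false]: the input [(0, 0)].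
   The auxiliary [V] is the channel input itself. *)
Definition P_timeshare (t : bool * Xin) : R :=
  (if t.1 then (if t.2.2 then 1 / 4 else 0)
   else if t.2 == (false, false) then 1 / 2 else 0)%R.

Definition K_id (v x : Xin) : R := b2R (x == v).

Lemma jointUVY_timeshare :
  jointUVY P_timeshare K_id = fun u v y =>
    (if u then (if v.2 && (y == v.1) then 1 / 4 else 0)
     else if v == (false, false) then 1 / 4 else 0)%R.
Proof.
apply: functional_extensionality => u; apply: functional_extensionality => v.
apply: functional_extensionality => y.
rewrite /jointUVY big_Xin !big_bool /W /PY /b2R /P_timeshare /K_id.
by case: u; case: v => [[] []]; case: y => /=; rewrite !RmultE; lra.
Qed.

Lemma jointUVZ_timeshare :
  jointUVZ P_timeshare K_id = fun u v z =>
    (if u then (if v.2 && z then 1 / 4 else 0)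
     else if (v == (false, false)) && ~~ z then 1 / 2 else 0)%R.
Proof.
apply: functional_extensionality => u; apply: functional_extensionality => v.
apply: functional_extensionality => z.
rewrite /jointUVZ big_Xin !big_bool /W /PY /b2R /P_timeshare /K_id.
by case: u; case: v => [[] []]; case: z => /=; rewrite !RmultE; lra.
Qed.

Lemma log2_eq0 (x : R) : x = 1 -> log2 x = 0.
Proof. by move=> ->; rewrite log2E ln1 mul0r. Qed.

Lemma log2_eq1 (x : R) : x = 2 -> log2 x = 1.
Proof. by move=> ->; rewrite log2E divff // gt_eqF // ln2_gt0. Qed.

Lemma cmi_jointUVY_timeshare : cmi (jointUVY P_timeshare K_id) = 1 / 2.
Proof.
rewrite jointUVY_timeshare cmiE; last by move=> [] [[] []] [] /=; lra.
rewrite !(big_bool, big_Xin) /= !(mul0r, addr0, add0r).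
repeat match goal with |- context [log2 ?x] =>
  first [ rewrite (@log2_eq1 x); last by field
        | rewrite (@log2_eq0 x); last by field ] end.
lra.
Qed.

Lemma cmi_jointUVZ_timeshare : cmi (jointUVZ P_timeshare K_id) = 0.
Proof.
rewrite jointUVZ_timeshare cmiE; last by move=> [] [[] []] [] /=; lra.
rewrite !(big_bool, big_Xin) /= !(mul0r, addr0, add0r).
repeat match goal with |- context [log2 ?x] =>
  rewrite (@log2_eq0 x); last by field end.
lra.
Qed.

Lemma P_timeshare_pmf : is_pmf P_timeshare.
Proof.
split; first by move=> [[] [[] []]]; rewrite /P_timeshare /=; lra.
by rewrite sum_pair !(big_bool, big_Xin) /P_timeshare /=; lra.
Qed.

Lemma K_id_pmf v : is_pmf (K_id v).
Proof.
split; first by move=> x; rewrite /K_id /b2R; case: eqP; lra.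
by rewrite big_Xin /K_id /b2R; case: v => [[] []] /=; lra.
Qed.

Lemma costUV_timeshare : costUV P_timeshare K_id = 1 / 2.
Proof.
by rewrite /costUV !(big_bool, big_Xin) /P_timeshare /K_id /cost /b2R /=; lra.
Qed.

Theorem proposition1 :
  (exists (U V : finType) (PUV : U * V -> R) (K : V -> Xin -> R),
      [/\ is_pmf PUV, (forall v, is_pmf (K v)),
          costUV PUV K <= 1 / 2 &
          1 / 2 <= cmi (jointUVY PUV K) - cmi (jointUVZ PUV K)])
  /\
  (exists c : R, c < 1 / 2 /\
     forall (V : finType) (PVX : V * Xin -> R),
       is_pmf PVX -> costV PVX <= 1 / 2 ->
       mi (jointVY PVX) - mi (jointVZ PVX) <= c).
Proof.
split.
  exists bool, Xin, P_timeshare, K_id; split.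
  - exact: P_timeshare_pmf.
  - exact: K_id_pmf.
  - by rewrite costUV_timeshare.
  - by rewrite cmi_jointUVY_timeshare cmi_jointUVZ_timeshare subr0.
exists ((ln 2 - 3 / 8) / ln 2); split.
  by rewrite ltr_pdivrMr ?ln2_gt0 //; have := ln2_lt; lra.
move=> V P P_pmf P_cost; rewrite ler_pdivlMr ?ln2_gt0 //.
exact: mi_jointV_gap_le.
Qed.
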